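(* Let $(\mathcal U,\mathcal F)$ be a strongly accessible set system, $S$ a nonempty maximal solution with canonical order $s_1,\dots,s_{|S|}$, and $1\le j\le |S|$. Then $T=\mathrm{complete}(S[j])$ is a maximal solution and $T\preceq S$.
   Context: A set system is a pair $(\mathcal U,\mathcal F)$ with $\mathcal U$ finite, $\mathcal F\subseteq 2^{\mathcal U}$, $\emptyset\in\mathcal F$; $S\in\mathcal F$ is maximal if there is no $Y\in\mathcal F$ with $S\subsetneq Y$. Strongly accessible: for all $X,Y\in\mathcal F$ with $X\subsetneq Y$ there is $z\in Y\setminus X$ with $X\cup\{z\}\in\mathcal F$. Elements of $\mathcal U$ are identified with distinct integers. For $X,A\subseteq\mathcal U$, $X^+_A=\{a\in A\setminus X: X\cup\{a\}\in\mathcal F\}$. $Z=\{x\in\mathcal U:\{x\}\in\mathcal F\}$, $\mathrm{source}(X)=\min(X\cap Z)$. For $X\in\mathcal F$ and $A\subseteq\mathcal U$, $\mathrm{complete}(X,A)$ is obtained by repeatedly replacing $X$ with $X\cup\{\min X^+_A\}$ while $X^+_A\neq\emptyset$, and then returning $X$; $\mathrm{complete}(X)=\mathrm{complete}(X,\mathcal U)$. The canonical order of a nonempty maximal solution $S$ is $s_1=\mathrm{source}(S)$ and $s_{i+1}=\min S[i]^+_S$ while this set is nonempty, where $S[i]=\{s_1,\dots,s_i\}$ (equivalently, the order in which $\mathrm{complete}(\{\mathrm{source}(S)\},S)$ adds elements). For maximal solutions $S\ne T$ with canonical orders $(s_i)$, $(t_i)$, let $i$ be the smallest index with $s_i\neq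 t_i$; then $S\prec T$ iff $s_i<t_i$, and $S\preceq T$ iff $S\prec T$ or $S=T$. *)

From mathcomp Require Import all_boot.
Set Implicit Arguments. Unset Strict Implicit. Unset Printing Implicit Defensive.

(* The universe U is 'I_n: its elements are identified with the distinct
   integers 0..n-1, ordered by the usual order on nat. A set system is
   F : {set {set 'I_n}} with set0 \in F. *)

Section SetSystems.
Variable n : nat.
Implicit Types (F : {set {set 'I_n}}) (X Y S A : {set 'I_n}).

Definition maximal F S : bool :=
  (S \in F) && [forall Y in F, ~~ (S \proper Y)].

Definition strongly_accessible F : Prop :=
  forall X Y, X \in F -> Y \in F -> X \proper Y ->
    exists2 z, z \in Y :\: X & (z |: X) \in F.

Definition ext F X A : {set 'I_n} := [set a in A :\: X | (a |: X) \in F].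

Definition Zset F : {set 'I_n} := [set x | [set x] \in F].

Definition minpick (A : {set 'I_n}) : option 'I_n :=
  [pick a in A | [forall b in A, (a <= b)%N]].

Definition complete_step F A X : {set 'I_n} :=
  if minpick (ext F X A) is Some a then a |: X else X.

(* complete(X,A): the step is iterated; each effective step adds a new
   element, so after n iterations X^+_A is empty and the process stopped. *)
Definition complete F X A : {set 'I_n} := iter n (complete_step F A) X.

Fixpoint trace F A X (k : nat) : seq 'I_n :=
  if k is k'.+1 then
    if minpick (ext F X A) is Some a then a :: trace F A (a |: X) k' else [::]
  else [::].

(* canonical order: s_1 = source(S) = min(S ∩ Z), then s_{i+1} = min S[i]^+_S *)
Definition canon F S : seq 'I_n :=
  if minpick (S :&: Zset F) is Some s then s :: trace F S [set s] n else [::].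

Definition prefix_set F S (i : nat) : {set 'I_n} :=
  [set x in take i (canon F S)].

Definition prec F S T : Prop :=
  S != T /\
  exists i, [/\ (i < size (canon F S))%N, (i < size (canon F T))%N,
     take i (canon F S) = take i (canon F T) &
     (nth 0 (map val (canon F S)) i < nth 0 (map val (canon F T)) i)%N].

Definition preceq F S T : Prop := prec F S T \/ S = T.
End SetSystems.

From mathcomp Require Import all_boot.
Set Implicit Arguments. Unset Strict Implicit. Unset Printing Implicit Defensive.

(* Write T for complete(S[j]). Both S and T contain s_1, so source(T) <= s_1.
   While the canonical order of S is still building S[j], each s_{i+1} lies
   in S[i]^+_T because S[j] is inside T, so the canonical order of T picks
   t_{i+1} <= s_{i+1}. Afterwards, as long as the two orders agree, the
   current set X lies on the chain built by complete(S[j]); the next element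
   of that chain is min X^+_U, it belongs to T and bounds the next element of
   S from below, so it is also the next element of T. Hence either the orders
   first differ at an index where T is smaller, or one order is a prefix of
   the other; in the latter case one solution contains the other, and
   maximality forces T = S. Strong accessibility makes T maximal and
   guarantees that canonical orders enumerate the whole solution. *)

Section CanonicalOrder.
Variables (n : nat) (F : {set {set 'I_n}}).
Implicit Types (A B X Y S T : {set 'I_n}) (c d : seq 'I_n).

Lemma minpickP A a :
  minpick A = Some a -> a \in A /\ {in A, forall b : 'I_n, a <= b}.
Proof.
rewrite /minpick; case: pickP => [x /andP[xA /forallP xmin] [<-]|//].
by split=> // b bA; exact: implyP (xmin b) bA.
Qed.

Lemma minpick_le A b : b \in A -> exists2 a, minpick A = Some a & a <= b.
Proof.
move=> bA; rewrite /minpick; case: pickP => [x /andP[_ /forallP xmin]|nomin].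
  by exists x => //; exact: implyP (xmin b) bA.
have [m mA mmin] := arg_minnP (fun i : 'I_n => nat_of_ord i) bA.
have /negP := nomin m; case; apply/andP; split=> //.
by apply/forallP=> c; apply/implyP; exact: mmin.
Qed.

Lemma minpick_None A : minpick A = None -> A = set0.
Proof.
move=> eA; apply/setP=> b; rewrite inE; apply/negP=> /minpick_le[a].
by rewrite eA.
Qed.

Lemma minpick_subset A B a : A \subset B -> minpick B = Some a -> a \in A ->
  minpick A = Some a.
Proof.
move=> sAB eB aA; have [a' eA a'a] := minpick_le aA.
have [a'A _] := minpickP eA; have [_ amin] := minpickP eB.
suff <- : a' = a by [].
by apply: val_inj; apply/anti_leq; rewrite a'a amin // (subsetP sAB).
Qed.

Lemma in_ext X A a :
  (a \in ext F X A) = [&& a \in A, a \notin X & (a |: X) \in F].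
Proof. by rewrite /ext !inE; case: (a \in A); case: (a \in X). Qed.

Lemma extS X A B : A \subset B -> ext F X A \subset ext F X B.
Proof.
move=> sAB; apply/subsetP=> a; rewrite !in_ext => /and3P[aA -> ->].
by rewrite (subsetP sAB).
Qed.

Lemma maximal_sub_eq S T : maximal F S -> T \in F -> S \subset T -> S = T.
Proof.
case/andP=> _ /forallP/(_ T) + TF sST.
by rewrite TF properEneq sST andbT negbK => /eqP.
Qed.

(* Lexicographic comparison in which a sequence and any of its prefixes are
   related both ways; [prec] is [lex_lt_at] plus distinctness. *)
Definition lex_lt_at c d (i : nat) : Prop :=
  [/\ i < size c, i < size d, take i c = take i d &
      nth 0 (map val c) i < nth 0 (map val d) i].

Definition lex_le_or_prefix c d : Prop :=
  (exists i, lex_lt_at c d i) \/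
  (exists r, c = d ++ r) \/ (exists r, d = c ++ r).

Lemma lex_le_or_prefix_nil c : lex_le_or_prefix c [::].
Proof. by right; left; exists c. Qed.

Lemma lex_le_or_prefix_cons (a b : 'I_n) c d :
  a <= b -> (a = b -> lex_le_or_prefix c d) ->
  lex_le_or_prefix (a :: c) (b :: d).
Proof.
rewrite leq_eqVlt => /orP[/eqP/val_inj eab|ltab]; last by left; exists 0.
move/(_ eab); rewrite {}eab => -[[i [ic id tcd ltcd]]|[[r ->]|[r ->]]].
- by left; exists i.+1; split=> //=; rewrite tcd.
- by right; left; exists r.
- by right; right; exists r.
Qed.

Section Completion.
Variable A : {set 'I_n}.
Local Notation step := (complete_step F A).

Lemma complete_step_in_F X : X \in F -> step X \in F.
Proof.
rewrite /complete_step; case e: minpick => [a|] // _.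
by have [] := minpickP e; rewrite in_ext => /and3P[].
Qed.

Lemma sub_complete_step X : X \subset step X.
Proof.
by rewrite /complete_step; case: minpick => [a|]; [exact: subsetUr|].
Qed.

Lemma iter_complete_step_in_F X p : X \in F -> iter p step X \in F.
Proof. by move=> XF; elim: p => //= p; exact: complete_step_in_F. Qed.

Lemma sub_iter_complete_step X p : X \subset iter p step X.
Proof.
by elim: p => //= p IH; apply: subset_trans IH (sub_complete_step _).
Qed.

Lemma complete_in_F X : X \in F -> complete F X A \in F.
Proof. exact: iter_complete_step_in_F. Qed.

(* Each effective step adds a new element, so n steps exhaust 'I_n. *)
Lemma ext_iter_complete_step X p :
  ext F (iter p step X) A = set0 \/ p <= #|iter p step X|.
Proof.
elim: p => [|p IH]; first by right.
rewrite iterS {1 3}/complete_step; case e: minpick => [a|]; last first.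
  by left; exact: minpick_None.
have [aext _] := minpickP e; move: aext; rewrite in_ext => /and3P[_ aX _].
case: IH => [ext0|le_p]; first by move: (minpickP e).1; rewrite ext0 inE.
by right; rewrite cardsU1 aX.
Qed.

Lemma ext_complete X : ext F (complete F X A) A = set0.
Proof.
case: (ext_iter_complete_step X n) => // le_n.
have eT : complete F X A = setT.
  by apply/eqP; rewrite eqEcard subsetT cardsT card_ord.
by apply/setP=> a; rewrite in_ext eT !inE andbF.
Qed.

Lemma iter_sub_complete X p : iter p step X \subset complete F X A.
Proof.
have fixed q : iter q step (complete F X A) = complete F X A.
  elim: q => //= q ->.
  by rewrite /complete_step; case e: minpick => [a|] //; move: (minpickP e).1;
     rewrite ext_complete inE.
case: (leqP p n) => [le_pn|lt_np].
  have -> : complete F X A = iter (n - p) step (iter p step X).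
    by rewrite -iterD subnK.
  exact: sub_iter_complete_step.
by rewrite -(fixed (p - n)) /complete -iterD subnK ?(ltnW lt_np).
Qed.

End Completion.

Lemma mem_trace A X k x : x \in trace F A X k -> x \in A.
Proof.
elim: k X => [|k IH] X //=; case e: minpick => [a|] //.
rewrite in_cons => /orP[/eqP ->|]; last exact: IH.
by have [] := minpickP e; rewrite in_ext => /and3P[].
Qed.

Lemma set_in_cons (a : 'I_n) c : [set x in a :: c] = a |: [set x in c].
Proof. by apply/setP=> x; rewrite !inE. Qed.

Lemma set_in_nil : [set x in [::] : seq 'I_n] = set0.
Proof. by apply/setP=> x; rewrite !inE. Qed.

Lemma trace_prefix_in_F A X k m :
  X \in F -> X :|: [set x in take m (trace F A X k)] \in F.
Proof.
elim: k X m => [|k IH] X m XF /=; first by rewrite set_in_nil setU0.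
case e: minpick => [a|]; last by rewrite set_in_nil setU0.
case: m => [|m]; first by rewrite take0 set_in_nil setU0.
have [] := minpickP e; rewrite in_ext => /and3P[_ _ aXF] _.
by rewrite /= set_in_cons setUCA setUA; exact: IH.
Qed.

Hypothesis F0 : set0 \in F.
Hypothesis SA : strongly_accessible F.

Lemma complete_maximal X : X \in F -> maximal F (complete F X setT).
Proof.
move=> XF; have TF := complete_in_F setT XF.
rewrite /maximal TF; apply/forallP=> Y; apply/implyP=> YF; apply/negP=> ltTY.
have [z /setDP[_ zT] zF] := SA TF YF ltTY.
have : z \in ext F (complete F X setT) setT by rewrite in_ext inE zT zF.
by rewrite ext_complete inE.
Qed.

Lemma trace_cover A X k : A \in F -> X \in F -> X \subset A ->
  #|A :\: X| <= k -> A \subset X :|: [set x in trace F A X k].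
Proof.
move=> AF; elim: k X => [|k IH] X XF sXA.
  by rewrite leqn0 cards_eq0 setD_eq0 => sAX; rewrite set_in_nil setU0.
move=> card_le /=; case e: minpick => [a|]; last first.
  rewrite set_in_nil setU0; apply: contraT => nsAX.
  have ltXA : X \proper A by rewrite properE sXA.
  have [z /setDP[zA zX] zF] := SA XF AF ltXA.
  have : z \in ext F X A by rewrite in_ext zA zX zF.
  by rewrite (minpick_None e) inE.
have [] := minpickP e; rewrite in_ext => /and3P[aA aX aXF] _.
have card_le' : #|A :\: (a |: X)| <= k.
  by move: card_le; rewrite (cardsD1 a) inE aX aA setDDl setUC.
rewrite set_in_cons setUA [X :|: _]setUC.
by apply: IH; rewrite // subUset sub1set aA.
Qed.

Lemma canon_set A : A \in F -> [set x in canon F A] = A.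
Proof.
move=> AF; rewrite /canon; case e: minpick => [s|]; last first.
  rewrite set_in_nil; apply/esym/eqP; apply: contraT => nzA.
  have ltA : set0 \proper A by rewrite proper0.
  have [z /setDP[zA _] zF] := SA F0 AF ltA.
  have : z \in A :&: Zset F by rewrite !inE zA -[[set z]]setU0.
  by rewrite (minpick_None e) inE.
have [] := minpickP e; rewrite !inE => /andP[sA sF] _.
apply/eqP; rewrite eqEsubset set_in_cons; apply/andP; split.
  by apply/subsetP=> x; rewrite !inE => /orP[/eqP->|/mem_trace].
apply: trace_cover; rewrite ?sub1set //.
by apply: leq_trans (max_card _) _; rewrite card_ord.
Qed.

Lemma source_exists S : S \in F -> S != set0 ->
  exists s, minpick (S :&: Zset F) = Some s.
Proof.
move=> SF nzS; have [z /setDP[zS _] zF] := SA F0 SF (etrans (proper0 S) nzS).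
have zSZ : z \in S :&: Zset F by rewrite !inE zS -[[set z]]setU0.
by have [s es _] := minpick_le zSZ; exists s.
Qed.

Lemma prefix_set_source S s j : minpick (S :&: Zset F) = Some s ->
  prefix_set F S j.+1 = s |: [set x in take j (trace F S [set s] n)].
Proof. by move=> es; rewrite /prefix_set /canon es /= set_in_cons. Qed.

Lemma prefix_set_in_F S j : prefix_set F S j \in F.
Proof.
case es: (minpick (S :&: Zset F)) => [s|]; last first.
  by rewrite /prefix_set /canon es /= set_in_nil.
case: j => [|j]; first by rewrite /prefix_set take0 set_in_nil.
rewrite (prefix_set_source _ es); apply: trace_prefix_in_F.
by have [] := minpickP es; rewrite !inE => /andP[].
Qed.

Local Notation complete_chain Y p := (iter p (complete_step F setT) Y).

Lemma trace_complete_lex T A Y k :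
  (forall p, complete_chain Y p \subset T) ->
  lex_le_or_prefix (trace F T Y k) (trace F A Y k).
Proof.
elim: k Y => [|k IH] Y chainT /=; first exact: lex_le_or_prefix_nil.
case eA: (minpick (ext F Y A)) => [b|]; last exact: lex_le_or_prefix_nil.
have [bA _] := minpickP eA.
have [u eU ub] := minpick_le (subsetP (extS Y (subsetT A)) b bA).
have uT : u \in T.
  by apply: (subsetP (chainT 1)); rewrite /= /complete_step eU setU11.
have eT : minpick (ext F Y T) = Some u.
  apply: (minpick_subset (extS Y (subsetT T)) eU).
  by move: (minpickP eU).1; rewrite !in_ext uT => /and3P[_ -> ->].
rewrite eT; apply: lex_le_or_prefix_cons => // <-; apply: IH => p.
by have := chainT p.+1; rewrite iterSr /complete_step eU.
Qed.

Lemma trace_prefix_lex T A Y m k :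
  (forall p,
     complete_chain (Y :|: [set x in take m (trace F A Y k)]) p \subset T) ->
  lex_le_or_prefix (trace F T Y k) (trace F A Y k).
Proof.
elim: m Y k => [|m IH] Y k chainT.
  by apply: trace_complete_lex; rewrite take0 set_in_nil setU0 in chainT.
case: k chainT => [|k] /=; first by move=> _; exact: lex_le_or_prefix_nil.
case eA: (minpick (ext F Y A)) => [b|] chainT; last first.
  exact: lex_le_or_prefix_nil.
rewrite /= set_in_cons setUCA setUA in chainT.
have bT : b \in T by apply: (subsetP (chainT 0)); rewrite /= inE setU11.
have [a eT ab] : exists2 a, minpick (ext F Y T) = Some a & a <= b.
  apply: minpick_le; move: (minpickP eA).1.
  by rewrite !in_ext bT => /and3P[_ -> ->].
by rewrite eT; apply: lex_le_or_prefix_cons => // ->; exact: IH.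
Qed.

Lemma canon_complete_prefix_lex S s j :
  minpick (S :&: Zset F) = Some s -> 0 < j ->
  lex_le_or_prefix (canon F (complete F (prefix_set F S j) setT)) (canon F S).
Proof.
case: j => // j es _; set T := complete F _ setT.
have chainT p : complete_chain (prefix_set F S j.+1) p \subset T.
  exact: iter_sub_complete.
have sT : s \in T.
  by apply: (subsetP (chainT 0)); rewrite (prefix_set_source _ es) !inE eqxx.
have sTZ : s \in T :&: Zset F.
  by rewrite inE sT; move: (minpickP es).1; rewrite inE => /andP[].
have [t et ts] := minpick_le sTZ.
rewrite /canon es et; apply: lex_le_or_prefix_cons => // ->.
by apply: (trace_prefix_lex (m := j)); rewrite -(prefix_set_source _ es).
Qed.

Lemma preceq_of_lex S T : maximal F S -> maximal F T ->
  lex_le_or_prefix (canon F T) (canon F S) -> preceq F T S.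
Proof.
move=> maxS maxT; have SF := (andP maxS).1; have TF := (andP maxT).1.
case: (eqVneq T S) => [-> _|neTS]; first by right.
have sub_of_prefix A B r :
    A \in F -> B \in F -> canon F A = canon F B ++ r -> B \subset A.
  move=> AF BF eAB; rewrite -(canon_set AF) -(canon_set BF).
  by apply/subsetP=> x; rewrite !inE eAB mem_cat => ->.
case=> [[i lt_i]|[[r eTS]|[r eST]]]; first by left; split=> //; exists i.
- by case/eqP: neTS; apply/esym/maximal_sub_eq; last exact: sub_of_prefix eTS.
- by case/eqP: neTS; apply/maximal_sub_eq; last exact: sub_of_prefix eST.
Qed.

End CanonicalOrder.

Theorem mainTheorem3 (n : nat) (F : {set {set 'I_n}}) (S : {set 'I_n}) (j : nat) :
  set0 \in F -> strongly_accessible F ->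
  maximal F S -> S != set0 ->
  (1 <= j <= #|S|)%N ->
  maximal F (complete F (prefix_set F S j) setT) /\
  preceq F (complete F (prefix_set F S j) setT) S.
Proof.
move=> F0 SA maxS nzS /andP[j_gt0 _].
have [s es] := source_exists F0 SA (andP maxS).1 nzS.
have maxT := complete_maximal SA (prefix_set_in_F F0 S j).
split=> //; apply: (preceq_of_lex F0 SA maxS maxT).
exact: canon_complete_prefix_lex es j_gt0.
Qed.
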